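(* Let $S$ be a monoid, $I, J$ sets and $P$ a $J\times I$ matrix, and let $M$ be either $M(S; I, J; P)$ (entries of $P$ in $S$) or $M^0(S; I, J; P)$ (entries of $P$ in $S \cup \{0\}$), and suppose $M$ is finitely generated. If some entry of $P$ is a unit of $S$, then there exist finite choices of generators $\sigma$ for $S$ and $\tau$ for $M$ and a regular language $R$ such that $L_\sigma(S) = L_\tau(M) \cap R$.
   Context: The Rees matrix semigroup with zero $M^0(S; I, J; P)$ (where $0 \notin S$) has elements $(I \times S \times J) \cup \{0\}$, $0$ is a zero, and $(i_1, g_1, j_1)(i_2, g_2, j_2) = (i_1, g_1 P_{j_1 i_2} g_2, j_2)$ if $P_{j_1 i_2} \in S$ and $=0$ if $P_{j_1 i_2} = 0$. If $P$ has no zero entries, $M(S;I,J;P)$ is the subsemigroup $I \times S \times J$. A unit of a monoid $S$ with identity $1$ is $g$ with $gh = hg = 1$ for some $h \in S$. For a semigroup $S$, $S^1$ denotes the monoid obtained by adjoining a new identity $1$ (even if $S$ already has one). A choice of generators for $S$ is a surjective morphism $\sigma : X^+ \to S$ from a free semigroup, finite if $X$ is finite; it extends uniquely to $\sigma^1 : X^* \to S^1$. Let $\overline{X} = \{\overline{x} : x \in X\}$ be a set of formal inverses, $\hat{X} = X \cup \overline{X}$. The loop automaton of $S$ with respect to $\sigma$ is the directed labelled graph with vertex set $S^1$, having for each $a \in S^1$ and $x \in X$ an edge from $a$ to $a(x\sigma)$ labelled $x$ and an edge from $a(x\sigma)$ to $a$ labelled $\overline{x}$. The loop problem $L_\sigma(S)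 \subseteq \hat{X}^*$ is the set of words labelling paths from $1$ to $1$ in this graph (including the empty word). *)

From mathcomp Require Import all_boot.
Set Implicit Arguments. Unset Strict Implicit. Unset Printing Implicit Defensive.

(* A semigroup is a carrier type with a binary operation [mul].
   The value of the free-semigroup morphism sigma : X^+ -> T on the nonempty
   word x0 w (x0 first letter). *)
Definition word_eval {T X : Type} (mul : T -> T -> T) (gen : X -> T)
  (x0 : X) (w : seq X) : T :=
  foldl (fun a x => mul a (gen x)) (gen x0) w.

Definition is_choice_of_generators {T X : Type} (mul : T -> T -> T)
  (gen : X -> T) : Prop :=
  forall t : T, exists (x0 : X) (w : seq X), word_eval mul gen x0 w = t.

Definition fin_generated {T : Type} (mul : T -> T -> T) : Prop :=
  exists (X : finType) (gen : X -> T), is_choice_of_generators mul gen.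

(* S^1 = option T, with None the adjoined identity; right multiplication by
   an element of T. *)
Definition mul1 {T : Type} (mul : T -> T -> T) (a : option T) (t : T)
  : option T :=
  match a with None => Some t | Some a' => Some (mul a' t) end.

(* Hat X = X + X : inl x is the letter x, inr x is the formal inverse xbar.
   loop_path mul gen a w b : w labels a path from a to b in the loop
   automaton (edge a --x--> a(x sigma), edge a(x sigma) --xbar--> a). *)
Fixpoint loop_path {T X : Type} (mul : T -> T -> T) (gen : X -> T)
  (a : option T) (w : seq (X + X)) (b : option T) : Prop :=
  match w with
  | [::] => a = b
  | inl x :: w' => loop_path mul gen (mul1 mul a (gen x)) w' b
  | inr x :: w' => exists a', mul1 mul a' (gen x) = a /\ loop_path mul gen a' w' b
  end.

Definition loop_problem {T X : Type} (mul : T -> T -> T) (gen : X -> T)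
  (w : seq (X + X)) : Prop :=
  loop_path mul gen None w None.

Definition regular {A : finType} (L : seq A -> Prop) : Prop :=
  exists (Q : finType) (q0 : Q) (d : Q -> A -> Q) (F : pred Q),
    forall w, L w <-> F (foldl d q0 w).

Definition hat {X Y : Type} (e : X -> Y) (z : X + X) : Y + Y :=
  match z with inl x => inl (e x) | inr x => inr (e x) end.

(* There exist finite choices of generators sigma : X -> S, tau : Y -> M,
   with X identified with a subset of Y via the injection e, and a regular
   R over Hat Y with L_sigma(S) = L_tau(M) ∩ R. *)
Definition loop_problem_is_regular_restriction {S M : Type}
  (mulS : S -> S -> S) (mulM : M -> M -> M) : Prop :=
  exists (X Y : finType) (e : X -> Y) (sigma : X -> S) (tau : Y -> M)
         (R : seq (Y + Y) -> Prop),
    injective e /\ is_choice_of_generators mulS sigma /\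
    is_choice_of_generators mulM tau /\ regular R /\
    forall w : seq (Y + Y),
      (loop_problem mulM tau w /\ R w) <->
      (exists u, loop_problem mulS sigma u /\ w = map (hat e) u).

Definition is_unit {S : Type} (mul : S -> S -> S) (one : S) (g : S) : Prop :=
  exists h, mul g h = one /\ mul h g = one.

Definition rees_mul {S I J : Type} (mul : S -> S -> S) (P : J -> I -> S)
  (a b : I * S * J) : I * S * J :=
  let: (i1, g1, j1) := a in let: (i2, g2, j2) := b in
  (i1, mul (mul g1 (P j1 i2)) g2, j2).

(* Rees matrix semigroup with zero M^0(S; I, J; P); None is 0 (both as an
   element of M^0 and as an entry of P). *)
Definition rees0_mul {S I J : Type} (mul : S -> S -> S)
  (P : J -> I -> option S) (a b : option (I * S * J)) : option (I * S * J) :=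
  match a, b with
  | Some (i1, g1, j1), Some (i2, g2, j2) =>
      match P j1 i2 with
      | Some p => Some (i1, mul (mul g1 p) g2, j2)
      | None => None
      end
  | _, _ => None
  end.

From mathcomp Require Import all_boot.
Set Implicit Arguments. Unset Strict Implicit. Unset Printing Implicit Defensive.

(* Let p = P j0 i0 have a left inverse q.  Then s |-> (i0, s q, j0) embeds S
   in M, and the partial map (i, g, j) |-> g P j i0 on M^1 (the middle entry
   of (i, g, j)(i0, 1, j0), undefined at 0) commutes with right multiplication
   by embedded elements, so it pulls paths of the loop automaton of M labelled
   by embedded generators back to paths in that of S.  Hence, once the
   embedded generators are added to a finite generating set of M, L(S) is
   L(M) restricted to the regular set of words over them.  S is generated by
   the middle entries of the generators of M and the sandwich entries P j i
   between consecutive ones.  Adjoining a zero does not change loop problems,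
   so M(S; I, J; P) reduces to M^0(S; I, J; P). *)

Lemma word_eval_morph (S M X : Type) (mulS : S -> S -> S) (mulM : M -> M -> M)
    (phi : S -> M) (phiM : {morph phi : a b / mulS a b >-> mulM a b})
    (gen : X -> S) x0 w :
  word_eval mulM (phi \o gen) x0 w = phi (word_eval mulS gen x0 w).
Proof. by rewrite /word_eval /=; elim: w (gen x0) => //= y w IH a; rewrite -phiM. Qed.

Lemma word_eval_map (T X Y : Type) (mul : T -> T -> T) (gen : Y -> T)
    (e : X -> Y) x0 w :
  word_eval mul (gen \o e) x0 w = word_eval mul gen (e x0) (map e w).
Proof. by rewrite /word_eval /=; elim: w (gen (e x0)) => //= y w IH a. Qed.

Lemma choice_of_generators_comp (T X Y : Type) (mul : T -> T -> T)
    (gen : Y -> T) (e : X -> Y) :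
  is_choice_of_generators mul (gen \o e) -> is_choice_of_generators mul gen.
Proof.
by move=> gen_e t; have [x0 [w <-]] := gen_e t; exists (e x0), (map e w);
  rewrite word_eval_map.
Qed.

Lemma regular_all (A : finType) (p : pred A) : regular (all p).
Proof.
exists bool, true, (fun b c => b && p c), id => w /=.
suff -> : forall b, foldl (fun b c => b && p c) b w = b && all p w by [].
by elim: w => [|c w IH] b /=; rewrite ?andbT // IH andbA.
Qed.

Lemma loop_path_map_hat (T X Y : Type) (mul : T -> T -> T) (tau : Y -> T)
    (e : X -> Y) u a b :
  loop_path mul tau a (map (hat e) u) b <-> loop_path mul (tau \o e) a u b.
Proof.
elim: u a => [|[x|x] u IH] a //=.
by split=> -[a' [Ea' path_u]]; exists a'; split=> //; apply/IH.
Qed.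

Lemma regular_restriction_of_loop_embedding (S M : Type)
    (mulS : S -> S -> S) (mulM : M -> M -> M) (X : finType) (sigma : X -> S)
    (phi : S -> M) :
  is_choice_of_generators mulS sigma -> fin_generated mulM ->
  (forall u, loop_problem mulS sigma u <-> loop_problem mulM (phi \o sigma) u) ->
  loop_problem_is_regular_restriction mulS mulM.
Proof.
move=> gen_S [Z [gen gen_M]] loopE.
pose tau (y : X + Z) := match y with inl x => phi (sigma x) | inr z => gen z end.
pose unhat (c : (X + Z) + (X + Z)) : option (X + X) :=
  match c with inl (inl x) => Some (inl x) | inr (inl x) => Some (inr x) | _ => None end.
have unhatK : pcancel (hat inl) unhat by case.
have hatK : ocancel unhat (hat inl) by case=> [[]|[]].
have loop_inl u : loop_problem mulM tau (map (hat inl) u) <->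
    loop_problem mulS sigma u.
  exact: iff_trans (loop_path_map_hat mulM tau inl u None None) (iff_sym (loopE u)).
exists X, (X + Z)%type, inl, sigma, tau, (all unhat).
split; first by move=> x y [].
split=> //; split; first exact: (@choice_of_generators_comp _ _ _ _ tau inr).
split; first exact: regular_all.
move=> w; split.
- case=> loop_w /all_filterP all_w; exists (pmap unhat w).
  rewrite (pmap_filter hatK) all_w; split=> //.
  by apply/loop_inl; rewrite (pmap_filter hatK) all_w.
- case=> u [loop_u ->]; split; first exact/loop_inl.
  by rewrite all_map; apply/allP => c _ /=; rewrite unhatK.
Qed.

Section LoopProblemTransfer.

Variables (S M : Type) (mulS : S -> S -> S) (mulM : M -> M -> M) (phi : S -> M).
Hypothesis phiM : {morph phi : a b / mulS a b >-> mulM a b}.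

Lemma loop_path_morph (X : Type) (sigma : X -> S) u a b :
  loop_path mulS sigma a u b ->
  loop_path mulM (phi \o sigma) (omap phi a) u (omap phi b).
Proof.
have mul1_morph c s : mul1 mulM (omap phi c) (phi s) = omap phi (mul1 mulS c s).
  by case: c => //= c; rewrite phiM.
elim: u a => [|[x|x] u IH] a /=; first by move->.
  by rewrite mul1_morph; apply: IH.
case=> a' [<- path_u]; exists (omap phi a'); split; last exact: IH.
by rewrite mul1_morph.
Qed.

Variable retr : option M -> option (option S).
Hypothesis retr1 : retr None = Some None.
Hypothesis retrM :
  forall a s, retr (mul1 mulM a (phi s)) = omap (fun b => mul1 mulS b s) (retr a).

Lemma loop_path_retract (X : Type) (sigma : X -> S) u a b a' :
  retr a = Some a' -> loop_path mulM (phi \o sigma) a u b ->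
  exists2 b', retr b = Some b' & loop_path mulS sigma a' u b'.
Proof.
elim: u a a' => [|[x|x] u IH] a a' /= ra; first by move<-; exists a'.
  by apply: IH; rewrite retrM ra.
case=> c [Ec path_u]; move: ra; rewrite -Ec retrM.
case rc: (retr c) => [c'|] //= -[Ea'].
have [b' rb path_u'] := IH _ _ rc path_u.
by exists b' => //; exists c'.
Qed.

Lemma loop_problem_transfer (X : Type) (sigma : X -> S) u :
  loop_problem mulS sigma u <-> loop_problem mulM (phi \o sigma) u.
Proof.
split; first exact: loop_path_morph.
by case/(loop_path_retract retr1) => b'; rewrite retr1 => -[<-].
Qed.

End LoopProblemTransfer.

Lemma loop_problem_adjoin_zero (M : Type) (mulM : M -> M -> M)
    (mul0 : option M -> option M -> option M)
    (mul0_Some : {morph Some : a b / mulM a b >-> mul0 a b})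
    (mul0_None : forall b, mul0 None b = None)
    (X : Type) (tau : X -> M) u :
  loop_problem mulM tau u <-> loop_problem mul0 (Some \o tau) u.
Proof.
apply: (@loop_problem_transfer _ _ mulM mul0 Some mul0_Some
  (fun a => if a is Some None then None else Some (obind id a))) => //.
by case=> [[a|]|] s //=; rewrite -?mul0_Some ?mul0_None.
Qed.

Section ReesMatrixWithZero.

Variables (S : Type) (mul : S -> S -> S) (one : S).
Variables (I J : Type) (P : J -> I -> option S).

Local Notation M0 := (option (I * S * J)).
Local Notation mul0 := (rees0_mul mul P).

(* [one] is a junk value, for the zero and for zero sandwich entries. *)
Definition rees0_entry (m : M0) : S := if m is Some (_, g, _) then g else one.

Definition rees0_sandwich (m n : M0) : S :=
  match m, n with
  | Some (_, _, j), Some (i, _, _) => odflt one (P j i)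
  | _, _ => one
  end.

Section SandwichGenerators.

Variables (Z : Type) (gen : Z -> M0).

Definition sandwich_gen (x : Z + Z * Z) : S :=
  match x with
  | inl k => rees0_entry (gen k)
  | inr (k, l) => rees0_sandwich (gen k) (gen l)
  end.

Definition sandwich_word (k : Z) (w : seq Z) : seq (Z + Z * Z) :=
  flatten (pairmap (fun k l => [:: inr (k, l); inl l]) k w).

Lemma foldl_rees0_zero w : foldl (fun a y => mul0 a (gen y)) None w = None.
Proof. by elim: w. Qed.

Lemma foldl_rees0_sandwich w k i1 g1 j1 i' g' i g j :
  gen k = Some (i', g', j1) ->
  foldl (fun a y => mul0 a (gen y)) (Some (i1, g1, j1)) w = Some (i, g, j) ->
  g = foldl (fun a x => mul a (sandwich_gen x)) g1 (sandwich_word k w).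
Proof.
elim: w k i1 g1 j1 i' g' => [|y w IH] k i1 g1 j1 i' g' genk /=; first by case.
rewrite genk; case geny: (gen y) => [[[i2 g2] j2]|]; last first.
  by rewrite foldl_rees0_zero.
case Pji: (P j1 i2) => [p|] /=; last by rewrite foldl_rees0_zero.
by rewrite Pji; apply: IH geny.
Qed.

Lemma word_eval_rees0_sandwich x0 w i g j :
  word_eval mul0 gen x0 w = Some (i, g, j) ->
  g = word_eval mul sandwich_gen (inl x0) (sandwich_word x0 w).
Proof.
rewrite /word_eval /=; case genx0: (gen x0) => [[[i1 g1] j1]|].
  exact: foldl_rees0_sandwich genx0.
by rewrite foldl_rees0_zero.
Qed.

Lemma sandwich_gen_generates (i0 : I) (j0 : J) :
  (forall s, exists x0 w, word_eval mul0 gen x0 w = Some (i0, s, j0)) ->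
  is_choice_of_generators mul sandwich_gen.
Proof.
move=> gen_S s; have [x0 [w /word_eval_rees0_sandwich ->]] := gen_S s.
by exists (inl x0), (sandwich_word x0 w).
Qed.

End SandwichGenerators.

Hypothesis mulA : forall a b c, mul a (mul b c) = mul (mul a b) c.
Hypotheses (mul1s : forall a, mul one a = a) (muls1 : forall a, mul a one = a).

Variables (i0 : I) (j0 : J) (p q : S).
Hypotheses (Pp : P j0 i0 = Some p) (qp : mul q p = one).

Definition rees0_embed (s : S) : M0 := Some (i0, mul s q, j0).

Definition rees0_retract (a : option M0) : option (option S) :=
  match a with
  | None => Some None
  | Some None => None
  | Some (Some (i, g, j)) => omap (fun r => Some (mul g r)) (P j i0)
  end.

Lemma rees0_embed_morph : {morph rees0_embed : s t / mul s t >-> mul0 s t}.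
Proof.
move=> s t; rewrite /rees0_embed /= Pp; congr (Some (_, _, _)).
by rewrite -!mulA (mulA q) qp mul1s.
Qed.

Lemma rees0_retractM a s :
  rees0_retract (mul1 mul0 a (rees0_embed s)) =
  omap (fun b => mul1 mul b s) (rees0_retract a).
Proof.
case: a => [[[[i g] j]|]|] //=; last by rewrite Pp /= -mulA qp muls1.
by case: (P j i0) => //= r; rewrite Pp /= -!mulA qp muls1.
Qed.

Lemma rees0_loop_problem_transfer (X : Type) (sigma : X -> S) u :
  loop_problem mul sigma u <-> loop_problem mul0 (rees0_embed \o sigma) u.
Proof.
exact: (loop_problem_transfer rees0_embed_morph (retr := rees0_retract) erefl rees0_retractM).
Qed.

End ReesMatrixWithZero.

Lemma rees0_regular_restriction (S : Type) (mul : S -> S -> S) (one : S)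
    (mulA : forall a b c, mul a (mul b c) = mul (mul a b) c)
    (mul1s : forall a, mul one a = a) (muls1 : forall a, mul a one = a)
    (I J : Type) (P : J -> I -> option S) :
  fin_generated (rees0_mul mul P) ->
  (exists j i p q, P j i = Some p /\ mul q p = one) ->
  loop_problem_is_regular_restriction mul (rees0_mul mul P).
Proof.
move=> [Z [gen gen_M]] [j0 [i0 [p [q [Pp qp]]]]].
apply: (@regular_restriction_of_loop_embedding _ _ _ _ _
          (sandwich_gen one P gen) (rees0_embed mul i0 j0 q)).
- by apply: (sandwich_gen_generates one (i0 := i0) (j0 := j0)) => s; apply: gen_M.
- by exists Z, gen.
- exact: (rees0_loop_problem_transfer mulA mul1s muls1 Pp qp (sandwich_gen _ _ _)).
Qed.

Lemma rees_adjoin_zero_morph (S : Type) (mul : S -> S -> S) (I J : Type)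
    (P : J -> I -> S) :
  {morph Some : a b /
    rees_mul mul P a b >-> rees0_mul mul (fun j i => Some (P j i)) a b}.
Proof. by case=> [[i g] j] [[i' g'] j']. Qed.

Lemma rees_regular_restriction (S : Type) (mul : S -> S -> S) (one : S)
    (mulA : forall a b c, mul a (mul b c) = mul (mul a b) c)
    (mul1s : forall a, mul one a = a) (muls1 : forall a, mul a one = a)
    (I J : Type) (P : J -> I -> S) :
  fin_generated (rees_mul mul P) ->
  (exists j i q, mul q (P j i) = one) ->
  loop_problem_is_regular_restriction mul (rees_mul mul P).
Proof.
move=> [Z [gen gen_M]] [j0 [i0 [q qp]]].
pose P0 j i := Some (P j i).
pose phi s := (i0, mul s q, j0).
have morph_Some := rees_adjoin_zero_morph mul P.
apply: (@regular_restriction_of_loop_embedding _ _ _ _ _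
          (sandwich_gen one P0 (Some \o gen)) phi).
- apply: (sandwich_gen_generates one (i0 := i0) (j0 := j0)) => s.
  have [x0 [w E]] := gen_M (i0, s, j0).
  by exists x0, w; rewrite (word_eval_morph morph_Some) E.
- by exists Z, gen.
- move=> u; have Pp : P0 j0 i0 = Some (P j0 i0) by [].
  apply: iff_trans (rees0_loop_problem_transfer mulA mul1s muls1 Pp qp _ u) _.
  exact: iff_sym (loop_problem_adjoin_zero morph_Some (fun _ => erefl) _ u).
Qed.

Theorem theorem5p3 (S : Type) (mul : S -> S -> S) (one : S)
  (mulA : forall a b c, mul a (mul b c) = mul (mul a b) c)
  (mul1s : forall a, mul one a = a) (muls1 : forall a, mul a one = a)
  (I J : Type) :
  (forall P : J -> I -> S,
      fin_generated (rees_mul mul P) ->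
      (exists (j : J) (i : I), is_unit mul one (P j i)) ->
      loop_problem_is_regular_restriction mul (rees_mul mul P))
  /\
  (forall P : J -> I -> option S,
      fin_generated (rees0_mul mul P) ->
      (exists (j : J) (i : I) (u : S), P j i = Some u /\ is_unit mul one u) ->
      loop_problem_is_regular_restriction mul (rees0_mul mul P)).
Proof.
split=> P gen_M.
- case=> j [i [q [_ qp]]].
  by apply: (rees_regular_restriction mulA mul1s muls1 gen_M); exists j, i, q.
- case=> j [i [p [Pp [q [_ qp]]]]].
  by apply: (rees0_regular_restriction mulA mul1s muls1 gen_M); exists j, i, p, q.
Qed.
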